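(* Over any commutative ring $R$, the $\mathcal S$-complex $\widetilde{\mathcal O}(1)\otimes\widetilde{\mathcal O}(-1)$ is $\mathcal S$-chain homotopy equivalent to $\widetilde{\mathcal O}(0)$.
   Context: Graded modules are $\mathbb Z$-graded; $V[i]_j=V_{i+j}$; differentials have degree $-1$; $\epsilon$ is the sign map ($(-1)^i$ on degree $i$). An $\mathcal S$-complex over $R$ is a chain complex $(\widetilde C,\widetilde d)$ of finitely generated free graded $R$-modules with a graded decomposition $\widetilde C=C\oplus C[-1]\oplus\mathsf R$ in which $\widetilde d=\begin{pmatrix} d&0&0\\ v&-d&\delta_2\\ \delta_1&0&r\end{pmatrix}$; $\chi$ denotes the degree $1$ map sending $C$ identically onto $C[-1]$ and zero on $C[-1]\oplus\mathsf R$. A morphism is a degree $0$ chain map commuting with the $\chi$'s; an $\mathcal S$-chain homotopy between morphisms is a degree $1$ map $\widetilde K$ with $\chi'\widetilde K+\widetilde K\chi=0$ and $\widetilde d'\widetilde K+\widetilde K\widetilde d$ equal to their difference; an $\mathcal S$-chain homotopy equivalence is a pair of morphisms whose composites are $\mathcal S$-chain homotopic to identities. The tensor product of $\mathcal S$-complexes is the tensor product chain complex (differential $\widetilde d\otimes 1+\epsilon\otimes\widetilde d'$) with $\chi^\otimes=\chi\otimes1+\epsilon\otimes\chi'$. $\widetilde{\mathcal O}(1)$: $C=R$ in degree $1$, $\mathsf R=R$ in degree $0$, $d=v=\delta_2=r=0$, $\delta_1=\mathrm{id}_R$. $\widetilde{\mathcal O}(-1)$: $C=R$ in degree $-2$,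 $\mathsf R=R$ in degree $0$, $d=v=\delta_1=r=0$, $\delta_2=\mathrm{id}_R$. $\widetilde{\mathcal O}(0)$: $C=0$, $\mathsf R=R$ in degree $0$, zero differential. *)

From HB Require Import structures.
From mathcomp Require Import all_boot all_order all_algebra.
Set Implicit Arguments. Unset Strict Implicit. Unset Printing Implicit Defensive.
Import Order.TTheory GRing.Theory Num.Theory.
Local Open Scope ring_scope.

(* Finitely generated free graded R-modules are given by a finite homogeneous
   basis [B] with a degree function.  An R-linear map between such modules is
   represented by its matrix [f : B -> B' -> R], where [f b b'] is the
   coefficient of the basis vector b' in f(b). *)

Section Defs.
Variable R : comPzRingType.

Definition mx (B B' : finType) := B -> B' -> R.

(* [mcomp g f] is the composite g o f (first f, then g). *)
Definition mcomp (A B C : finType) (g : mx B C) (f : mx A B) : mx A C :=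
  fun a c => \sum_(b : B) f a b * g b c.

Definition madd (A B : finType) (f g : mx A B) : mx A B := fun a b => f a b + g a b.
Definition mopp (A B : finType) (f : mx A B) : mx A B := fun a b => - f a b.
Definition mid (A : finType) : mx A A := fun a a' => (a == a')%:R.
Definition mzero (A B : finType) : mx A B := fun _ _ => 0.

Definition has_deg (A B : finType) (dA : A -> int) (dB : B -> int) (k : int)
  (f : mx A B) : Prop := forall a b, f a b != 0 -> dB b = dA a + k.

(* A graded chain complex of f.g. free graded modules together with a map chi:
   all that the notions of S-morphism / S-homotopy use. *)
Record chiCx := ChiCx {
  cB : finType;
  cdeg : cB -> int;
  cd : mx cB cB;
  cchi : mx cB cB }.

(* S-complex data: C (basis BC) and the module R (basis BR); blocks of the
   differential [[d,0,0],[v,-d,delta2],[delta1,0,r]]. *)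
Record SData := SD {
  BC : finType; BRR : finType;
  degC : BC -> int; degR : BRR -> int;
  sd : mx BC BC; sv : mx BC BC;
  sdelta1 : mx BC BRR; sdelta2 : mx BRR BC; sr : mx BRR BRR }.

(* Basis of Ctilde = C (+) C[-1] (+) R.  An element of C of degree i sits in
   degree i+1 in C[-1], since C[-1]_j = C_{j-1}. *)
Definition SB (S : SData) : finType := (BC S + (BC S + BRR S))%type.

Definition Sdeg (S : SData) (x : SB S) : int :=
  match x with
  | inl c => degC c
  | inr (inl c) => degC c + 1
  | inr (inr y) => degR y
  end.

Definition Sdiff (S : SData) : mx (SB S) (SB S) := fun x y =>
  match x, y with
  | inl c, inl c' => sd c c'
  | inl c, inr (inl c') => sv c c'
  | inl c, inr (inr y') => sdelta1 c y'
  | inr (inl c), inr (inl c') => - sd c c'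
  | inr (inr y), inr (inl c') => sdelta2 y c'
  | inr (inr y), inr (inr y') => sr y y'
  | _, _ => 0
  end.

Definition Schi (S : SData) : mx (SB S) (SB S) := fun x y =>
  match x, y with
  | inl c, inr (inl c') => (c == c')%:R
  | _, _ => 0
  end.

Definition is_Scomplex (S : SData) : Prop :=
  has_deg (@Sdeg S) (@Sdeg S) (-1) (@Sdiff S) /\
  mcomp (@Sdiff S) (@Sdiff S) = @mzero _ _.

Definition SCx (S : SData) : chiCx := @ChiCx (SB S) (@Sdeg S) (@Sdiff S) (@Schi S).

Definition eps (i : int) : R := (-1) ^+ `|i|%N.

Definition tens_mx (X Y : chiCx) (f : mx (cB X) (cB X)) (g : mx (cB Y) (cB Y))
  : mx ((cB X * cB Y)%type) ((cB X * cB Y)%type) := fun p q =>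
  f p.1 q.1 * (p.2 == q.2)%:R + eps (@cdeg X p.1) * (p.1 == q.1)%:R * g p.2 q.2.

Definition tensor (X Y : chiCx) : chiCx :=
  @ChiCx ((cB X * cB Y)%type) (fun p : (cB X * cB Y)%type => cdeg p.1 + cdeg p.2)
    (@tens_mx X Y (@cd X) (@cd Y)) (@tens_mx X Y (@cchi X) (@cchi Y)).

Definition is_Smorphism (X Y : chiCx) (f : mx (cB X) (cB Y)) : Prop :=
  [/\ has_deg (@cdeg X) (@cdeg Y) 0 f,
      mcomp (@cd Y) f = mcomp f (@cd X) &
      mcomp (@cchi Y) f = mcomp f (@cchi X)].

Definition is_Shomotopy (X Y : chiCx) (f g K : mx (cB X) (cB Y)) : Prop :=
  [/\ has_deg (@cdeg X) (@cdeg Y) 1 K,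
      madd (mcomp (@cchi Y) K) (mcomp K (@cchi X)) = @mzero _ _ &
      madd (mcomp (@cd Y) K) (mcomp K (@cd X)) = madd f (mopp g)].

Definition Shomotopic (X Y : chiCx) (f g : mx (cB X) (cB Y)) : Prop :=
  exists K, is_Shomotopy f g K.

Definition S_htpy_equiv (X Y : chiCx) : Prop :=
  exists (f : mx (cB X) (cB Y)) (g : mx (cB Y) (cB X)),
    [/\ is_Smorphism f, is_Smorphism g,
        Shomotopic (mcomp g f) (@mid _) & Shomotopic (mcomp f g) (@mid _)].

Definition O1 : SData :=
  @SD unit unit (fun _ => 1) (fun _ => 0)
      (@mzero _ _) (@mzero _ _) (fun _ _ => 1) (@mzero _ _) (@mzero _ _).

Definition Om1 : SData :=
  @SD unit unit (fun _ => -2) (fun _ => 0)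
      (@mzero _ _) (@mzero _ _) (@mzero _ _) (fun _ _ => 1) (@mzero _ _).

Definition O0 : SData :=
  @SD void unit (fun v => match v with end) (fun _ => 0)
      (@mzero _ _) (@mzero _ _) (@mzero _ _) (@mzero _ _) (@mzero _ _).

End Defs.

(* The degree-0 cycle z = - c (x) chi c' + chi c (x) c' + r (x) r' of
   O(1) (x) O(-1) spans a copy of O(0).  The inclusion [incl] of z and a left
   inverse [proj] are S-morphisms, and the complement of z is contractible
   compatibly with chi: [htpy] is an S-chain homotopy from [incl] o [proj] to
   the identity. *)

From mathcomp Require Import all_boot all_algebra.
From Stdlib Require Import FunctionalExtensionality.
Import GRing.Theory.
Local Open Scope ring_scope.

Section MatrixCalculus.
Variable R : comPzRingType.

Lemma mxP (A B : finType) (f g : mx R A B) : (forall a b, f a b = g a b) -> f = g.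
Proof.
move=> eq_fg; apply: functional_extensionality => a.
by apply: functional_extensionality => b; apply: eq_fg.
Qed.

Lemma mcomp0m (A B C : finType) (f : mx R A B) :
  mcomp (@mzero R B C) f = @mzero R A C.
Proof. by apply: mxP => a c; rewrite /mcomp big1 // => b _; rewrite mulr0. Qed.

Lemma mcompm0 (A B C : finType) (g : mx R B C) :
  mcomp g (@mzero R A B) = @mzero R A C.
Proof. by apply: mxP => a c; rewrite /mcomp big1 // => b _; rewrite mul0r. Qed.

Lemma has_deg_mzero (A B : finType) (dA : A -> int) (dB : B -> int) k :
  has_deg dA dB k (@mzero R A B).
Proof. by move=> a b; rewrite eqxx. Qed.

Lemma big_unit (F : unit -> R) : \sum_i F i = F tt.
Proof. by rewrite (big_pred1 tt) // => -[]. Qed.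

Lemma big_void (F : void -> R) : \sum_i F i = 0.
Proof. by rewrite big_pred0 // => -[]. Qed.

Lemma big_pair (A B : finType) (F : A * B -> R) :
  \sum_p F p = \sum_a \sum_b F (a, b).
Proof. by rewrite pair_bigA; apply: eq_bigr => -[]. Qed.

Lemma big_SB (S : SData R) (F : SB S -> R) :
  \sum_x F x = \sum_i F (inl i) + \sum_i F (inr (inl i)) + \sum_j F (inr (inr j)).
Proof. rewrite !big_sumType; exact: addrA. Qed.

End MatrixCalculus.

Section SHomotopy.
Variable R : comPzRingType.

Lemma Shomotopic_refl (X Y : chiCx R) (f : mx R (cB X) (cB Y)) : Shomotopic f f.
Proof.
exists (@mzero R _ _); split; first exact: has_deg_mzero.
  by rewrite mcomp0m mcompm0; apply: mxP => a b; rewrite /madd addr0.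
by rewrite mcomp0m mcompm0; apply: mxP => a b; rewrite /madd /mopp addr0 subrr.
Qed.

Lemma S_htpy_equiv_retract (X Y : chiCx R)
    (f : mx R (cB X) (cB Y)) (g : mx R (cB Y) (cB X)) :
  is_Smorphism f -> is_Smorphism g -> mcomp f g = @mid R (cB Y) ->
  Shomotopic (mcomp g f) (@mid R (cB X)) -> S_htpy_equiv X Y.
Proof.
move=> f_mor g_mor fgE gf_htpy; exists f, g.
by split; rewrite // fgE; apply: Shomotopic_refl.
Qed.

End SHomotopy.

Section TensorO1Om1.
Variable R : comPzRingType.

Local Notation X := (tensor (SCx (O1 R)) (SCx (Om1 R))).
Local Notation Y := (SCx (O0 R)).
(* Basis of either factor: the generator c of C, its copy chi c in C[-1],
   and the generator r of the summand R. *)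
Local Notation c := (inl tt).
Local Notation chic := (inr (inl tt)).
Local Notation r := (inr (inr tt)).

Lemma big_X (F : cB X -> R) : \sum_p F p =
  F (c, c) + F (c, chic) + F (c, r) + F (chic, c) + F (chic, chic) + F (chic, r)
  + F (r, c) + F (r, chic) + F (r, r).
Proof.
rewrite (@big_pair _ (cB (SCx (O1 R))) (cB (SCx (Om1 R))) F) (@big_SB _ (O1 R)).
by rewrite !big_unit !(@big_SB _ (Om1 R)) !big_unit !addrA.
Qed.

Lemma big_Y (F : cB Y -> R) : \sum_y F y = F r.
Proof. by rewrite (@big_SB _ (O0 R)) !big_void big_unit !add0r. Qed.

Definition dX : mx R (cB X) (cB X) := fun p q =>
  match p, q with
  | (c, c), (r, c) | (c, chic), (r, chic) | (c, r), (r, r) => 1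
  | (c, r), (c, chic) => -1
  | (chic, r), (chic, chic) | (r, r), (r, chic) => 1
  | _, _ => 0
  end.

Definition chiX : mx R (cB X) (cB X) := fun p q =>
  match p, q with
  | (c, c), (chic, c) | (c, chic), (chic, chic) | (c, r), (chic, r) => 1
  | (c, c), (c, chic) => -1
  | (chic, c), (chic, chic) | (r, c), (r, chic) => 1
  | _, _ => 0
  end.

Definition proj : mx R (cB X) (cB Y) := fun p _ =>
  match p with
  | (c, chic) | (chic, c) | (r, r) => 1
  | _ => 0
  end.

Definition incl : mx R (cB Y) (cB X) := fun _ q =>
  match q with
  | (c, chic) => -1
  | (chic, c) | (r, r) => 1
  | _ => 0
  end.

Definition htpy : mx R (cB X) (cB X) := fun p q =>
  match p, q with
  | (r, c), (c, c) => -1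
  | (r, chic), (chic, c) => 1
  | (r, chic), (c, chic) => -1
  | (c, chic), (c, r) | (chic, c), (c, r) => 1
  | (chic, chic), (chic, r) => -1
  | _, _ => 0
  end.

Ltac eval_entry := rewrite /= /mzero ?mulr1n ?mulr0n;
  rewrite ?(mulr0, mul0r, mulr1, mul1r); rewrite ?(mulrN1, mulN1r, opprK, oppr0);
  rewrite ?(addr0, add0r); rewrite ?(addrN, addNr, add0r).

Lemma cdXE : @cd _ X = dX.
Proof.
apply: mxP => -[[[]|[[]|[]]] [[]|[[]|[]]]] [[[]|[[]|[]]] [[]|[[]|[]]]];
  by rewrite /= /tens_mx /eps /= ?expr1 ?sqrrN ?expr1n; eval_entry.
Qed.

Lemma cchiXE : @cchi _ X = chiX.
Proof.
apply: mxP => -[[[]|[[]|[]]] [[]|[[]|[]]]] [[[]|[[]|[]]] [[]|[[]|[]]]];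
  by rewrite /= /tens_mx /eps /= ?expr1 ?sqrrN ?expr1n; eval_entry.
Qed.

Lemma cdYE : @cd _ Y = @mzero R _ _.
Proof. by apply: mxP => -[[]|[[]|[]]] [[]|[[]|[]]]. Qed.

Lemma cchiYE : @cchi _ Y = @mzero R _ _.
Proof. by apply: mxP => -[[]|[[]|[]]] [[]|[[]|[]]]. Qed.

Lemma proj_deg : has_deg (@cdeg _ X) (@cdeg _ Y) 0 proj.
Proof. by move=> -[[[]|[[]|[]]] [[]|[[]|[]]]] [[]|[[]|[]]]; rewrite /= ?eqxx. Qed.

Lemma incl_deg : has_deg (@cdeg _ Y) (@cdeg _ X) 0 incl.
Proof. by move=> -[[]|[[]|[]]] [[[]|[[]|[]]] [[]|[[]|[]]]]; rewrite /= ?eqxx. Qed.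

Lemma htpy_deg : has_deg (@cdeg _ X) (@cdeg _ X) 1 htpy.
Proof.
by move=> -[[[]|[[]|[]]] [[]|[[]|[]]]] [[[]|[[]|[]]] [[]|[[]|[]]]]; rewrite /= ?eqxx.
Qed.

Lemma proj_dX : mcomp proj dX = @mzero R _ _.
Proof.
apply: mxP => -[[[]|[[]|[]]] [[]|[[]|[]]]] [[]|[[]|[]]];
  by rewrite /mcomp big_X; eval_entry.
Qed.

Lemma proj_chiX : mcomp proj chiX = @mzero R _ _.
Proof.
apply: mxP => -[[[]|[[]|[]]] [[]|[[]|[]]]] [[]|[[]|[]]];
  by rewrite /mcomp big_X; eval_entry.
Qed.

Lemma dX_incl : mcomp dX incl = @mzero R _ _.
Proof.
apply: mxP => -[[]|[[]|[]]] [[[]|[[]|[]]] [[]|[[]|[]]]];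
  by rewrite /mcomp big_X; eval_entry.
Qed.

Lemma chiX_incl : mcomp chiX incl = @mzero R _ _.
Proof.
apply: mxP => -[[]|[[]|[]]] [[[]|[[]|[]]] [[]|[[]|[]]]];
  by rewrite /mcomp big_X; eval_entry.
Qed.

Lemma proj_incl : mcomp proj incl = @mid R _.
Proof.
apply: mxP => -[[]|[[]|[]]] [[]|[[]|[]]].
by rewrite /mcomp big_X; eval_entry.
Qed.

Lemma htpy_chiX : madd (mcomp chiX htpy) (mcomp htpy chiX) = @mzero R _ _.
Proof.
apply: mxP => -[[[]|[[]|[]]] [[]|[[]|[]]]] [[[]|[[]|[]]] [[]|[[]|[]]]];
  by rewrite /madd /mcomp !big_X; eval_entry.
Qed.

Lemma htpy_dX :
  madd (mcomp dX htpy) (mcomp htpy dX) = madd (mcomp incl proj) (mopp (@mid R _)).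
Proof.
apply: mxP => -[[[]|[[]|[]]] [[]|[[]|[]]]] [[[]|[[]|[]]] [[]|[[]|[]]]];
  by rewrite /madd /mcomp /mopp /mid !big_X big_Y; eval_entry.
Qed.

Lemma proj_Smorphism : is_Smorphism proj.
Proof.
split; first exact: proj_deg.
  by rewrite cdYE cdXE mcomp0m proj_dX.
by rewrite cchiYE cchiXE mcomp0m proj_chiX.
Qed.

Lemma incl_Smorphism : is_Smorphism incl.
Proof.
split; first exact: incl_deg.
  by rewrite cdYE cdXE mcompm0 dX_incl.
by rewrite cchiYE cchiXE mcompm0 chiX_incl.
Qed.

Lemma htpy_Shomotopy : is_Shomotopy (mcomp incl proj) (@mid R _) htpy.
Proof.
by split; rewrite ?cdXE ?cchiXE; [exact: htpy_deg | exact: htpy_chiX | exact: htpy_dX].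
Qed.

End TensorO1Om1.

Theorem lemma2p7 (R : comPzRingType) :
  S_htpy_equiv (tensor (SCx (O1 R)) (SCx (Om1 R))) (SCx (O0 R)).
Proof.
apply: (@S_htpy_equiv_retract R _ _ (proj R) (incl R)).
- exact: proj_Smorphism.
- exact: incl_Smorphism.
- exact: proj_incl.
- by exists (htpy R); exact: htpy_Shomotopy.
Qed.
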